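(* Let $2\le r\le m\le n$, $k\ge1$, $R=F[t]$ and $M=R^n$. Let $\mathbf u_1,\dots,\mathbf u_m\in M$ have all components polynomials of degree at most $k-1$, written $\mathbf u_j=\sum_{l=0}^{k-1}\mathbf u_j^{(l)}t^l$ with $\mathbf u_j^{(l)}\in F^n$, and let $\overline{\mathbf u_j}$ denote the image of $\mathbf u_j$ in $M/t^kM$. Suppose that $\overline{\mathbf u_{j_1}}\wedge\dots\wedge\overline{\mathbf u_{j_r}}=0$ in $\bigwedge^r(M/t^kM)$ for all $1\le j_1<\dots<j_r\le m$, and that $\mathbf u_1^{(0)}\wedge\dots\wedge\mathbf u_{r-1}^{(0)}\neq0$. Then for all $1\le j_1<\dots<j_r<j_{r+1}\le m$, $$\mathbf u_{j_1}\wedge\dots\wedge\mathbf u_{j_r}\wedge\mathbf u_{j_{r+1}}\in t^{2k}\textstyle\bigwedge^{r+1}M.$$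
   Context: $F$ is an algebraically closed field; wedge products are taken over the relevant ring ($R$ for elements of $M$, $R/(t^k)$ for elements of $M/t^kM$). Here $r+1\le m$ is needed for the conclusion to be nonvacuous. *)

From HB Require Import structures.
From mathcomp Require Import all_boot all_order all_algebra.
Set Implicit Arguments. Unset Strict Implicit. Unset Printing Implicit Defensive.
Import GRing.Theory.
Local Open Scope ring_scope.

Definition strictly_increasing (p q : nat) (s : 'I_p -> 'I_q) : Prop :=
  forall i j : 'I_p, (i < j)%N -> (s i < s j)%N.

(* Coordinate of v_1 /\ ... /\ v_p (v_l in R^n) on the standard basis vector
   e_{s 1} /\ ... /\ e_{s p} of the free module /\^p R^n : the p x p minor. *)
Definition wedge_coord (R : comNzRingType) (n p : nat) (v : 'I_p -> 'cV[R]_n)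
  (s : 'I_p -> 'I_n) : R :=
  \det (\matrix_(i < p, l < p) v l (s i) ord0).

Definition wedge_neq0 (R : comNzRingType) (n p : nat) (v : 'I_p -> 'cV[R]_n) : Prop :=
  exists s : 'I_p -> 'I_n, strictly_increasing s /\ wedge_coord v s != 0.

Definition wedge_in_tpow (F : fieldType) (n p : nat) (c : nat)
  (v : 'I_p -> 'cV[{poly F}]_n) : Prop :=
  forall s : 'I_p -> 'I_n, strictly_increasing s -> ('X^c %| wedge_coord v s)%R.

(* Image of v_1 /\ ... /\ v_p (v_l in F[t]^n) in /\^p (M/t^k M) is zero, via
   /\^p (M / t^k M) = /\^p M / t^k /\^p M (M free). *)
Definition wedge_mod_eq0 (F : fieldType) (n p k : nat) (v : 'I_p -> 'cV[{poly F}]_n) : Prop :=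
  wedge_in_tpow k v.

Definition coef0_vec (F : fieldType) (n : nat) (u : 'cV[{poly F}]_n) : 'cV[F]_n :=
  \col_i (u i ord0)`_0.

From mathcomp Require Import all_boot all_order all_algebra perm.
Set Implicit Arguments. Unset Strict Implicit. Unset Printing Implicit Defensive.
Import GRing.Theory.
Local Open Scope ring_scope.

(* Write r = p + 1 and d = t^k.  Choose a p-minor P of u_1, ..., u_p whose constant
   term is nonzero, so det P is coprime to t, and let B be any (p+2)-minor of the u_j.
   The entries of the Schur complement  det P * B - X adj(P) U  are bordered
   (p+1)-minors, hence divisible by d, so  det P * B = X C + d Z  where the inner
   dimension of X C is only p.  Such a determinant is divisible by d^(p+2-p) = d^2,
   and coprimality strips the factor (det P)^(p+2). *)

Lemma det_mulmx_addZ (R : idomainType) p q (X : 'M[R]_(q, p)) (C : 'M[R]_(p, q))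
    (Y : 'M[R]_q) (s : R) :
  s != 0 -> (p <= q)%N ->
  \det (X *m C + s *: Y) = s ^+ (q - p) * \det (block_mx s%:M C (- X) Y).
Proof.
move=> s_neq0 le_pq.
have elim_X : block_mx 1%:M 0 X s%:M *m block_mx s%:M C (- X) Y
              = block_mx s%:M C 0 (X *m C + s *: Y).
  rewrite mulmx_block !mul1mx !mul0mx !addr0 mul_mx_scalar mul_scalar_mx.
  by rewrite mul_scalar_mx scalerN subrr.
have := congr1 determinant elim_X.
rewrite det_mulmx det_lblock det_ublock det1 mul1r !det_scalar.
have -> : s ^+ q = s ^+ p * s ^+ (q - p) by rewrite -exprD subnKC.
by rewrite -mulrA => /(mulfI (expf_neq0 p s_neq0)) ->.
Qed.

Lemma det_bordered (R : idomainType) p (P : 'M[R]_p) (c : 'rV[R]_p) (b : 'cV[R]_p)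
    (x : R) :
  \det P != 0 ->
  \det (block_mx x%:M c b P : 'M_(1 + p)) = x * \det P - (c *m \adj P *m b) 0 0.
Proof.
move=> detP_neq0.
pose N : 'M[R]_(1 + p) := block_mx (\det P)%:M 0 (- (\adj P *m b)) 1%:M.
have elim_b : block_mx x%:M c b P *m N
              = block_mx (x * \det P - (c *m \adj P *m b) 0 0)%:M c 0 P.
  rewrite /N mulmx_block !mulmx0 !mulmx1 !add0r.
  rewrite !mulmxN !mulmxA mul_mx_adj !mul_scalar_mx [b *m _]mul_mx_scalar subrr.
  by congr block_mx; apply/rowP => i; rewrite ord1 !mxE !mulr1n mulrC.
have := congr1 determinant elim_b.
rewrite det_mulmx det_ublock /N det_lblock det1 mulr1 !det_scalar1.
exact: mulIf.
Qed.

Definition idx_cons N p (x : 'I_N) (f : 'I_p -> 'I_N) (a : 'I_(1 + p)) : 'I_N :=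
  if split a is inr b then f b else x.

Lemma mxsub_idx_cons (R : nzRingType) N1 N2 p (A : 'M[R]_(N1, N2))
    (x : 'I_N1) (f : 'I_p -> 'I_N1) (y : 'I_N2) (g : 'I_p -> 'I_N2) :
  mxsub (idx_cons x f) (idx_cons y g) A
  = block_mx (A x y)%:M (\row_b A x (g b)) (\col_a A (f a) y) (mxsub f g A).
Proof.
apply/matrixP => a b; rewrite -(splitK a) -(splitK b) /idx_cons.
case: (split a) => a'; case: (split b) => b';
  rewrite ?block_mxEul ?block_mxEur ?block_mxEdl ?block_mxEdr !mxE !unsplitK //.
by rewrite !ord1 mulr1n.
Qed.

Lemma exists_perm_sorted p N (f : 'I_p -> 'I_N) : injective f ->
  exists sg : 'S_p, strictly_increasing (f \o sg).
Proof.
move=> f_inj; pose t := [tuple val (f i) | i < p].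
have /tuple_permP[sg sort_t] : perm_eq (sort leq t) t by rewrite perm_sort.
exists sg => i j lt_ij.
have t_uniq : uniq t by rewrite map_inj_uniq ?enum_uniq // => a b /val_inj/f_inj.
have : sorted ltn (sort leq t).
  by rewrite ltn_sorted_uniq_leq sort_uniq t_uniq sort_sorted //; exact: leq_total.
rewrite sort_t => /(sorted_ltn_nth ltn_trans 0%N)/(_ i j).
rewrite !inE size_map size_enum_ord !(nth_map i) -?enumT ?size_enum_ord // !nth_ord_enum.
by rewrite !tnth_map !tnth_ord_tuple; apply.
Qed.

Lemma det_mxsub_perm (R : comNzRingType) N1 N2 p (A : 'M[R]_(N1, N2))
    (f : 'I_p -> 'I_N1) (g : 'I_p -> 'I_N2) (sg tau : 'S_p) :
  \det (mxsub f g A) = (-1) ^+ sg * (-1) ^+ tau * \det (mxsub (f \o sg) (g \o tau) A).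
Proof.
have -> : mxsub (f \o sg) (g \o tau) A = row_perm sg (col_perm tau (mxsub f g A)).
  by apply/matrixP => i j; rewrite !mxE.
rewrite row_permE col_permE !det_mulmx !det_perm odd_permV [\det _ * _]mulrC.
by rewrite [X in _ * X]mulrA mulrA -expr2 exprMn !sqrr_sign !mul1r.
Qed.

Lemma dvdp_det_mxsub_sorted (R : idomainType) N1 N2 p (A : 'M[{poly R}]_(N1, N2))
    (d : {poly R}) :
  (forall (s : 'I_p -> 'I_N1) (J : 'I_p -> 'I_N2),
     strictly_increasing s -> strictly_increasing J -> d %| \det (mxsub s J A)) ->
  forall (s : 'I_p -> 'I_N1) (J : 'I_p -> 'I_N2), d %| \det (mxsub s J A).
Proof.
move=> dvd_sorted s J.
have [/injectiveP s_inj|/injectivePn[i1 [i2 ne_i s_eq]]] := boolP (injectiveb s);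
  last first.
  by rewrite (determinant_alternate ne_i) // => l; rewrite !mxE s_eq.
have [/injectiveP J_inj|/injectivePn[l1 [l2 ne_l J_eq]]] := boolP (injectiveb J);
  last first.
  by rewrite -det_tr (determinant_alternate ne_l) // => i; rewrite !mxE J_eq.
have [sg s_sorted] := exists_perm_sorted s_inj.
have [tau J_sorted] := exists_perm_sorted J_inj.
by rewrite (det_mxsub_perm _ _ _ sg tau) dvdp_mull ?dvd_sorted.
Qed.

Section SquareDivisibility.

Variables (F : fieldType) (N1 N2 p : nat) (A : 'M[{poly F}]_(N1, N2)) (d : {poly F}).
Variables (s0 : 'I_p -> 'I_N1) (J0 : 'I_p -> 'I_N2).

Hypothesis d_neq0 : d != 0.
Hypothesis dvdp_minors : forall (s : 'I_p.+1 -> 'I_N1) (J : 'I_p.+1 -> 'I_N2),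
  d %| \det (mxsub s J A).
Hypothesis minor0_neq0 : \det (mxsub s0 J0 A) != 0.
Hypothesis minor0_coprime : coprimep (\det (mxsub s0 J0 A)) d.

Variables (s : 'I_p.+2 -> 'I_N1) (J : 'I_p.+2 -> 'I_N2).

Let P := mxsub s0 J0 A.
Let X := mxsub s J0 A.
Let U := mxsub s0 J A.
Let B := mxsub s J A.

Lemma dvdp_schur_complement i l : d %| (\det P *: B - X *m \adj P *m U) i l.
Proof.
have -> : (\det P *: B - X *m \adj P *m U) i l
          = \det (mxsub (idx_cons (s i) s0) (idx_cons (J l) J0) A).
  rewrite mxsub_idx_cons det_bordered // !mxE mulrC; congr (_ - _).
  apply: eq_bigr => a _; rewrite !mxE; congr (_ * _).
  by apply: eq_bigr => b _; rewrite !mxE.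
exact: dvdp_minors.
Qed.

Lemma sqr_dvdp_minor : d ^+ 2 %| \det B.
Proof.
pose W := \det P *: B - X *m \adj P *m U.
have W_eq : W = d *: \matrix_(i, l) (W i l %/ d).
  apply/matrixP => i l; rewrite [in RHS]mxE [X in _ * X]mxE mulrC divpK //.
  exact: dvdp_schur_complement.
have := congr1 determinant (subrK (X *m \adj P *m U) (\det P *: B)).
rewrite -/W W_eq addrC detZ (det_mulmx_addZ _ _ _ d_neq0 (leq_addl 2 p)) addnK.
move=> det_scaleB.
have : d ^+ 2 %| \det P ^+ p.+2 * \det B by rewrite -det_scaleB dvdp_mulr.
by rewrite Gauss_dvdpr // coprimep_expl // coprimep_expr // coprimep_sym.
Qed.

End SquareDivisibility.

Lemma wedge_coord_mxsub (R : comNzRingType) n m p (u : 'I_m -> 'cV[R]_n)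
    (J : 'I_p -> 'I_m) (s : 'I_p -> 'I_n) :
  wedge_coord (fun l => u (J l)) s = \det (mxsub s J (\matrix_(i, j) u j i ord0)).
Proof. by congr (\det _); apply/matrixP => i l; rewrite !mxE. Qed.

Lemma horner0_wedge_coord (F : fieldType) n p (v : 'I_p -> 'cV[{poly F}]_n)
    (s : 'I_p -> 'I_n) :
  (wedge_coord v s).[0] = wedge_coord (fun l => coef0_vec (v l)) s.
Proof.
rewrite -horner_evalE -det_map_mx; congr (\det _).
by apply/matrixP => i l; rewrite !mxE /= horner_evalE horner_coef0.
Qed.

Theorem theorem4p3 (F : closedFieldType) (n m r k : nat)
  (u : 'I_m -> 'cV[{poly F}]_n) :
  (2 <= r)%N -> (r <= m)%N -> (m <= n)%N -> (1 <= k)%N ->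
  (forall (j : 'I_m) (i : 'I_n), (size (u j i ord0) <= k)%N) ->
  (forall J : 'I_r -> 'I_m, strictly_increasing J ->
     wedge_mod_eq0 k (fun l => u (J l))) ->
  (forall J0 : 'I_r.-1 -> 'I_m, (forall l, val (J0 l) = val l) ->
     wedge_neq0 (fun l => coef0_vec (u (J0 l)))) ->
  forall J : 'I_r.+1 -> 'I_m, strictly_increasing J ->
    wedge_in_tpow (2 * k) (fun l => u (J l)).
Proof.
case: r => // p _ lt_pm _ _ _ dvdp_mod coef0_indep J _ s _.
pose J0 (l : 'I_p) := widen_ord (ltnW lt_pm) l.
have [s0 [_]] := coef0_indep J0 (fun=> erefl).
rewrite -horner0_wedge_coord wedge_coord_mxsub => minor0_root0.
rewrite wedge_coord_mxsub mulnC exprM.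
apply: (sqr_dvdp_minor (s0 := s0) (J0 := J0)).
- by rewrite monic_neq0 ?monicXn.
- apply: dvdp_det_mxsub_sorted => s' J' s'_sorted J'_sorted.
  by rewrite -wedge_coord_mxsub; apply: dvdp_mod.
- by apply: contra_neq minor0_root0 => ->; rewrite horner0.
- by rewrite coprimep_expr // coprimepX.
Qed.
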